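(* Fix a step $t$ and an arm $i$. If the last $\min\{D,t\}$ steps were played as a round robin over a set of arms of size at least $R$, then $$\Pr\Big[m_t(i)\le\frac{2d(i)}{R}+16\log T+2\Big]\ge 1-\frac{1}{T^2}.$$
   Context: Delay-as-payoff bandit: $K$ arms, horizon $T$, maximum delay $D\in\mathbb{N}$. Arm $i$ has an unknown distribution $\mathcal{D}_i$ on $\{0,1,\dots,D\}$; at each step $s$ the agent picks an arm $i_s$ and a delay $d_s\sim\mathcal{D}_{i_s}$ is drawn independently of everything else, its value being revealed at time $s+d_s$. Let $d(i)=\mathbb{E}_{X\sim\mathcal{D}_i}[X]$ be the expected delay of arm $i$. The number of missing plays of arm $i$ at time $t$ is $m_t(i)=|\{s\le t: i_s=i,\ s+d_s\ge t\}|$. ''Played as a round robin over a set of size at least $R$'' means the steps are organized in rounds, each round playing every arm of the current set exactly once, where the current set always has at least $R$ elements. *)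

From HB Require Import structures.
From mathcomp Require Import all_boot all_order all_algebra.
From mathcomp Require Import all_classical all_reals exp.
Set Implicit Arguments. Unset Strict Implicit. Unset Printing Implicit Defensive.
Import Order.TTheory GRing.Theory Num.Theory.
Local Open Scope ring_scope.

(* Conventions.
   - Arms are ['I_K]; steps are 1, 2, ...; the (deterministic) arm schedule is
     [a : nat -> 'I_K], [a s] being the arm played at step [s].
   - Arm [i] has delay distribution [p i : 'I_D.+1 -> R] on {0,...,D}
     (nonnegative, summing to 1).
   - The delays of steps 1..t form a vector [d : {ffun 'I_t -> 'I_D.+1}],
     [d j] being the delay of step [j.+1]; they are independent with
     d_s ~ p (a s), i.e. the law of [d] is the product measure below. *)

Definition exp_delay (R : realType) (K D : nat) (p : 'I_K -> 'I_D.+1 -> R)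
  (i : 'I_K) : R := \sum_(x < D.+1) (x : nat)%:R * p i x.

Definition prob_delays (R : realType) (K D t : nat) (p : 'I_K -> 'I_D.+1 -> R)
  (a : nat -> 'I_K) (E : pred {ffun 'I_t -> 'I_D.+1}) : R :=
  \sum_(d : {ffun 'I_t -> 'I_D.+1} | E d) \prod_(j < t) p (a j.+1) (d j).

Definition missing (K D t : nat) (a : nat -> 'I_K)
  (d : {ffun 'I_t -> 'I_D.+1}) (i : 'I_K) : nat :=
  #|[set j : 'I_t | (a j.+1 == i) && (t <= j.+1 + d j)%N]|.

(* The sequence of arms [w] (played on consecutive steps) is played as a round
   robin over a set of size at least [r]: it splits into consecutive rounds,
   round k playing distinct arms of its current set S_k (with #|S_k| >= r),
   every arm of S_k exactly once; only the first and the last round may be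
   cut by the boundaries of the window (partial rounds). *)
Definition round_robin (K r : nat) (w : seq 'I_K) : Prop :=
  exists (rs : seq (seq 'I_K)) (S : seq {set 'I_K}),
    [/\ size S = size rs, w = flatten rs &
      forall k, (k < size rs)%N ->
        [/\ (r <= #|nth (finset.set0 : {set 'I_K}) S k|)%N,
            uniq (nth [::] rs k),
            {subset nth [::] rs k <= nth (finset.set0 : {set 'I_K}) S k} &
            (0 < k < (size rs).-1)%N -> size (nth [::] rs k) = #|nth (finset.set0 : {set 'I_K}) S k| ]].

Definition last_window (K D t : nat) (a : nat -> 'I_K) : seq 'I_K :=
  [seq a s | s <- iota (t - minn D t).+1 (minn D t)].

From HB Require Import structures.
From mathcomp Require Import all_boot all_order all_algebra.
From mathcomp Require Import all_classical all_reals exp sequences.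
From mathcomp Require Import zify ring lra.
Set Implicit Arguments. Unset Strict Implicit. Unset Printing Implicit Defensive.
Import Order.TTheory GRing.Theory Num.Theory.

(* m_t(i) is a sum of independent indicators, one per step s <= t, so the
   Chernoff bound with parameter ln 2 gives
   Pr[m_t(i) > B] <= exp(E[m_t(i)] - B ln 2).  Under a round robin over sets of
   at least R arms, arm i is played at most once per round, so among the last
   x + 1 <= D + 1 steps it is played at most x/R + 3 times; hence
   E[m_t(i)] <= d(i)/R + 3, and B = 2 d(i)/R + 16 log T + 2 makes the
   exponent at most -2 log T. *)

Section Rounds.
Variables (T : eqType) (r : nat) (x : T).

Lemma count_mem_uniq_le1 {s : seq T} : uniq s -> count_mem x s <= 1.
Proof. by move=> us; rewrite count_uniq_mem // leq_b1. Qed.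

Lemma count_flatten_rounds (rs : seq (seq T)) :
  (forall k, k < size rs -> uniq (nth [::] rs k)) ->
  (forall k, k < (size rs).-1 -> r <= size (nth [::] rs k)) ->
  r * count_mem x (flatten rs) <= size (flatten rs) + r.
Proof.
elim: rs => [|s rs IH] uniq_rs size_rs /=; first by rewrite muln0.
have c_s : count_mem x s <= 1 := count_mem_uniq_le1 (uniq_rs 0 isT).
rewrite count_cat size_cat.
case: rs IH uniq_rs size_rs => [|s' rs] IH uniq_rs size_rs /=.
  by move: (count_mem x s) c_s => c; nia.
have r_s : r <= size s by apply: (size_rs 0).
have := IH (fun k => uniq_rs k.+1) (fun k => size_rs k.+1).
by move: (count_mem x s) c_s (count_mem x _) => c c_s c' /=; nia.
Qed.

Lemma count_drop_flatten_rounds (rs : seq (seq T)) n :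
  (forall k, k < size rs -> uniq (nth [::] rs k)) ->
  (forall k, 0 < k < (size rs).-1 -> r <= size (nth [::] rs k)) ->
  r * count_mem x (drop n (flatten rs)) <= size (drop n (flatten rs)) + 2 * r.
Proof.
elim: rs n => [|s rs IH] n uniq_rs size_rs /=; first by rewrite muln0.
rewrite drop_cat; case: ltnP => n_s; last first.
  apply: IH => [k|k k_rs]; first exact: (uniq_rs k.+1).
  by apply: (size_rs k.+1) => /=; move: k_rs => /andP[_]; lia.
have c_s := count_mem_uniq_le1 (drop_uniq n (uniq_rs 0 isT)).
have size_rs' k : k < (size rs).-1 -> r <= size (nth [::] rs k).
  by move=> k_rs; apply: (size_rs k.+1) => /=; lia.
have := count_flatten_rounds (fun k => uniq_rs k.+1) size_rs'.
rewrite count_cat size_cat.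
by move: (count_mem x (drop n s)) c_s (count_mem x _) => c c_s c'; nia.
Qed.

End Rounds.

Lemma round_robin_count_drop K r (i : 'I_K) (w : seq 'I_K) n :
  round_robin r w -> r * count_mem i (drop n w) <= size (drop n w) + 2 * r.
Proof.
move=> [rs [S [_ -> rounds]]]; apply: count_drop_flatten_rounds => [k /rounds[] //|k k_rs].
have /rounds[r_S _ _ -> //] : k < size rs.
  by case/andP: k_rs => _; case: (size rs) => // m /ltnW.
Qed.

Section Window.
Variables (K D t r : nat) (a : nat -> 'I_K) (i : 'I_K).

Definition still_missing (j x : nat) : bool := (a j.+1 == i) && (t <= j.+1 + x).

Lemma missingE (d : {ffun 'I_t -> 'I_D.+1}) :
  missing a d i = \sum_(j < t) still_missing j (d j).
Proof.
rewrite /missing -sum1_card big_mkcond /=; apply: eq_bigr => j _.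
by rewrite inE /still_missing; case: (_ && _).
Qed.

Lemma sum_still_missingE x :
  \sum_(j < t) still_missing j x =
  count_mem i [seq a s | s <- iota (t - minn x.+1 t).+1 (minn x.+1 t)].
Proof.
set L := minn x.+1 t.
have -> : \sum_(j < t) still_missing j x = count (still_missing^~ x) (iota 0 t).
  have -> : iota 0 t = index_iota 0 t by rewrite /index_iota subn0.
  rewrite -sum1_count big_mkord [RHS]big_mkcond /=.
  by apply: eq_bigr => j _; case: still_missing.
have -> : iota 0 t = iota 0 (t - L) ++ iota (t - L) L by rewrite -iotaD subnK ?geq_minr.
rewrite count_cat.
have -> : count (still_missing^~ x) (iota 0 (t - L)) = 0.
  apply/eqP; rewrite eqn0Ngt -has_count; apply/hasPn => j.
  by rewrite mem_iota /still_missing negb_and => j_lt; apply/orP; right; lia.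
rewrite add0n -add1n iotaDl count_map count_map; apply: eq_in_count => j.
rewrite mem_iota /= /still_missing add1n => /andP[j_ge j_lt].
by rewrite (_ : t <= j.+1 + x) ?andbT //; lia.
Qed.

Hypothesis rr : round_robin r (last_window D t a).

Lemma count_last_steps n : n <= minn D t ->
  r * count_mem i [seq a s | s <- iota (t - n).+1 n] <= n + 2 * r.
Proof.
move=> n_le; have := round_robin_count_drop i (minn D t - n) rr.
rewrite /last_window -map_drop drop_iota size_map size_iota.
have -> : minn D t - (minn D t - n) = n by lia.
by have -> : (t - minn D t).+1 + (minn D t - n) = (t - n).+1 by lia.
Qed.

Lemma sum_still_missing_le x : 0 < r -> x <= D ->
  r * \sum_(j < t) still_missing j x <= x + 3 * r.
Proof.
move=> r_gt0 x_le; rewrite sum_still_missingE.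
(* The steps that can still be missing with delay x are the last minn x.+1 t
   ones: a suffix of the window, or the whole window and one step before it. *)
have [L_le|L_gt] := leqP (minn x.+1 t) (minn D t).
  by have := count_last_steps L_le; lia.
have -> : minn x.+1 t = (minn D t).+1 by lia.
have -> : t - (minn D t).+1 = (t - minn D t).-1 by lia.
rewrite /= prednK; last by lia.
have := count_last_steps (leqnn (minn D t)).
by case: (a (t - minn D t) == i) => /=; lia.
Qed.
End Window.

Local Open Scope ring_scope.

Lemma ln2_ge_half (R : realType) : 2^-1 <= ln (2 : R).
Proof.
have := @le_ln1Dx R (- 2^-1); rewrite ltrN2 invf_lt1 ?ltr1n // => /(_ isT).
have -> : 1 - 2^-1 = (2 : R)^-1 by field.
by rewrite lnV ?posrE // lerN2.
Qed.

Section ProductMeasure.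
Variables (R : realType) (I J : finType) (f : I -> J -> R).
Hypotheses (f_ge0 : forall i y, 0 <= f i y) (f_sum1 : forall i, \sum_y f i y = 1).

Lemma sum_prod_ffun1 : \sum_(d : {ffun I -> J}) \prod_i f i (d i) = 1.
Proof. by rewrite -bigA_distr_bigA big1. Qed.

Lemma sum_prod_ffunC (E : pred {ffun I -> J}) :
  \sum_(d | E d) \prod_i f i (d i) = 1 - \sum_(d | ~~ E d) \prod_i f i (d i).
Proof. by apply/eqP; rewrite eq_sym subr_eq -{1}sum_prod_ffun1 (bigID E). Qed.

Lemma sum_prod_ffun_pow2_count (c : I -> J -> bool) :
  \sum_(d : {ffun I -> J}) (\prod_i f i (d i)) * 2 ^+ (\sum_i c i (d i))%N =
  \prod_i (1 + \sum_y f i y * (c i y)%:R).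
Proof.
transitivity (\sum_(d : {ffun I -> J}) \prod_i (f i (d i) * (1 + (c i (d i))%:R))).
  apply: eq_bigr => d _; rewrite expr_sum -big_split /=.
  by apply: eq_bigr => i _; case: (c i (d i)); rewrite ?expr1 ?expr0 ?addr0.
rewrite -(bigA_distr_bigA (fun i y => f i y * (1 + (c i y)%:R))).
apply: eq_bigr => i _.
by under eq_bigr do rewrite mulrDr mulr1; rewrite big_split /= f_sum1.
Qed.

Lemma chernoff_count (c : I -> J -> bool) (B : R) :
  \sum_(d : {ffun I -> J} | B < (\sum_i c i (d i))%N%:R) \prod_i f i (d i) <=
  expR (\sum_i \sum_y f i y * (c i y)%:R - ln 2 * B).
Proof.
set X := fun d : {ffun I -> J} => (\sum_i c i (d i))%N.
have w_ge0 d : 0 <= \prod_i f i (d i) by apply: prodr_ge0.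
have markov : \sum_(d : {ffun I -> J} | B < (X d)%:R) \prod_i f i (d i) <=
    \sum_(d : {ffun I -> J}) (\prod_i f i (d i)) * 2 ^+ X d * expR (- (ln 2 * B)).
  rewrite big_mkcond; apply: ler_sum => d _; case: ifP => [XB|_]; last first.
    by rewrite mulr_ge0 ?expR_ge0 ?mulr_ge0 ?exprn_ge0.
  have pow2E n : (2 : R) ^+ n = expR (n%:R * ln 2) by rewrite expRM_natl lnK ?posrE.
  rewrite -mulrA ler_peMr // pow2E -expRD; apply: ltW.
  by rewrite expR_gt1 mulrC -mulrBr mulr_gt0 ?ln_gt0 ?ltr1n ?subr_gt0.
apply: (le_trans markov); rewrite -mulr_suml sum_prod_ffun_pow2_count expRD.
rewrite ler_wpM2r ?expR_ge0 // expR_sum; apply: ler_prod => i _.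
by rewrite addr_ge0 ?sumr_ge0 ?expR_ge1Dx // => y _; rewrite mulr_ge0.
Qed.

End ProductMeasure.

Lemma mean_still_missing_le (R : realType) K D t r (p : 'I_K -> 'I_D.+1 -> R)
    (a : nat -> 'I_K) (i : 'I_K) :
  (forall j x, 0 <= p j x) -> (forall j, \sum_x p j x = 1) -> (0 < r)%N ->
  round_robin r (last_window D t a) ->
  \sum_(j < t) \sum_(y < D.+1) p (a j.+1) y * (still_missing t a i j y)%:R <=
  exp_delay p i / r%:R + 3.
Proof.
move=> p_ge0 p_sum1 r_gt0 rr; have r_pos : 0 < r%:R :> R by rewrite ltr0n.
have -> : \sum_(j < t) \sum_(y < D.+1) p (a j.+1) y * (still_missing t a i j y)%:R =
    \sum_(y < D.+1) p i y * (\sum_(j < t) still_missing t a i j y)%N%:R.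
  rewrite exchange_big /=; apply: eq_bigr => y _.
  rewrite natr_sum mulr_sumr; apply: eq_bigr => j _.
  by rewrite /still_missing; case: eqP => [-> //|_] /=; rewrite !mulr0.
apply: (@le_trans _ _ (\sum_(y < D.+1) p i y * (y%:R / r%:R + 3))).
  apply: ler_sum => y _; apply: ler_wpM2l => //.
  have := sum_still_missing_le i rr r_gt0 (ltnSE (ltn_ord y)).
  rewrite -(ler_nat R) natrM natrD natrM => bound.
  by rewrite -(ler_pM2l r_pos) mulrDr mulrCA divff ?gt_eqF // mulr1; lra.
have -> : \sum_(y < D.+1) p i y * (y%:R / r%:R + 3) =
    exp_delay p i / r%:R + 3 * \sum_(y < D.+1) p i y.
  rewrite mulr_suml mulr_sumr -big_split /=; apply: eq_bigr => y _.
  by field; rewrite gt_eqF.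
by rewrite p_sum1 mulr1.
Qed.

Lemma chernoff_budget (R : realType) (mu L : R) : 0 <= mu -> ln 2 <= L ->
  mu + 3 - ln 2 * (2 * mu + 16 * L + 2) <= - (2 * L).
Proof.
move=> mu_ge0; have := ln2_ge_half R; set l := ln 2 => l_ge l_le.
have : 0 <= (2 * l - 1) * mu by rewrite mulr_ge0 //; lra.
have : 0 <= (2 * l - 1) * L by rewrite mulr_ge0 //; lra.
nra.
Qed.

Theorem lemma1 (R : realType) (K D T r t : nat) (i : 'I_K)
  (p : 'I_K -> 'I_D.+1 -> R) (a : nat -> 'I_K) :
  (forall j x, 0 <= p j x) ->
  (forall j, \sum_(x < D.+1) p j x = 1) ->
  (0 < r)%N -> (1 <= t <= T)%N ->
  round_robin r (last_window D t a) ->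
  1 - 1 / (T%:R ^+ 2) <=
  prob_delays p a (fun d : {ffun 'I_t -> 'I_D.+1} => (missing a d i)%:R
                     <= 2 * exp_delay p i / r%:R + 16 * ln (T%:R : R) + 2).
Proof.
move=> p_ge0 p_sum1 r_gt0 /andP[t_gt0 t_le_T] rr.
have [T_le1|T_gt1] := leqP T 1.
  have -> : T = 1%N by lia.
  by rewrite expr1n divr1 subrr; apply: sumr_ge0 => d _; apply: prodr_ge0.
pose f (j : 'I_t) := p (a j.+1).
set B := 2 * exp_delay p i / r%:R + 16 * ln (T%:R : R) + 2.
rewrite /prob_delays (@sum_prod_ffunC R _ _ f (fun j => p_sum1 _)) lerD2l lerN2.
under eq_bigl => d do rewrite -ltNge missingE.
apply: le_trans (@chernoff_count R _ _ f (fun j => p_ge0 _) (fun j => p_sum1 _)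
                   (fun j y => still_missing t a i j y) B) _.
have invT2E : 1 / T%:R ^+ 2 = expR (- (2 * ln (T%:R : R))).
  rewrite expRN mulr_natl -lnXn ?ltr0n 1?ltnW // lnK ?div1r // posrE.
  by rewrite exprn_gt0 // ltr0n ltnW.
have mu_ge0 : 0 <= exp_delay p i / r%:R.
  by rewrite divr_ge0 // sumr_ge0 // => y _; rewrite mulr_ge0.
have ln2_le : ln 2 <= ln (T%:R : R) by rewrite ler_ln ?posrE ?ler_nat ?ltr0n // ltnW.
rewrite invT2E ler_expR /B -mulrA; apply: le_trans (chernoff_budget mu_ge0 ln2_le).
by rewrite lerD2r; apply: mean_still_missing_le p_ge0 p_sum1 r_gt0 rr.
Qed.
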